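(* A group $H$ belongs to the class $\mathscr{R}$ if and only if $H$ is isomorphic to a subgroup of $G_n$ for some integer $n\geq 0$.
   Context: For a group $A$, $A\wr\mathbf{Z}=(\bigoplus_{i\in\mathbf{Z}}A)\rtimes\mathbf{Z}$ is the restricted wreath product with $\mathbf{Z}$ acting by index shift. A bounded direct sum is a countable direct sum of groups with a uniform upper bound on their derived lengths. $\mathscr{R}$ is the smallest non-empty class of groups closed under $A\mapsto A\wr\mathbf{Z}$, bounded direct sums, and taking subgroups. Define $G_0$ to be the trivial group and, for $n\geq 1$, $G_n=\bigoplus_{i\in\mathbf{Z}}(G_{n-1}\wr\mathbf{Z})$. *)

From Stdlib Require Import ZArith List Lia Classical FunctionalExtensionality ProofIrrelevance.
Set Implicit Arguments.

Record Group : Type := MkGroup {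
  gcar :> Type;
  gmul : gcar -> gcar -> gcar;
  ginv : gcar -> gcar;
  gone : gcar;
  gmulA : forall x y z, gmul x (gmul y z) = gmul (gmul x y) z;
  gmul1 : forall x, gmul gone x = x;
  gmulg1 : forall x, gmul x gone = x;
  gmulV : forall x, gmul (ginv x) x = gone;
  gmulgV : forall x, gmul x (ginv x) = gone }.
Arguments gmul {g}.
Arguments ginv {g}.

Lemma ginv1 (G : Group) : ginv (gone G) = gone G.
Proof. rewrite <- (gmul1 G (ginv (gone G))). apply gmulgV. Qed.

(** Homomorphisms; "H is isomorphic to a subgroup of G" = H embeds in G. *)
Definition is_hom {G H : Group} (f : G -> H) : Prop :=
  forall x y, f (gmul x y) = gmul (f x) (f y).
Definition embeds (H G : Group) : Prop :=
  exists f : H -> G, is_hom f /\ (forall x y, f x = f y -> x = y).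

Inductive gen {G : Group} (P : G -> Prop) : G -> Prop :=
| gen_base x : P x -> gen P x
| gen_one : gen P (gone G)
| gen_mul x y : gen P x -> gen P y -> gen P (gmul x y)
| gen_inv x : gen P x -> gen P (ginv x).

Definition commg {G : Group} (a b : G) : G := gmul (gmul (ginv a) (ginv b)) (gmul a b).

Fixpoint derived (G : Group) (k : nat) : G -> Prop :=
  match k with
  | 0 => fun _ => True
  | S k' => gen (fun x => exists a b, derived G k' a /\ derived G k' b /\ x = commg a b)
  end.

Definition derived_length_le (G : Group) (d : nat) : Prop :=
  forall x, derived G d x -> x = gone G.

Section DSum.
Variables (I : Type) (A : I -> Group).

Definition fin_supp (f : forall i, A i) : Prop :=
  exists s : list I, forall i, f i <> gone (A i) -> In i s.

Definition dcar := { f : forall i, A i | fin_supp f }.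

Lemma dext (x y : dcar) : (forall i, proj1_sig x i = proj1_sig y i) -> x = y.
Proof.
  destruct x as [f hf], y as [g hg]; simpl; intro E.
  assert (f = g) by (apply functional_extensionality_dep; exact E). subst g.
  f_equal. apply proof_irrelevance.
Qed.

Definition dmul (x y : dcar) : dcar.
Proof.
  refine (exist _ (fun i => gmul (proj1_sig x i) (proj1_sig y i)) _).
  destruct x as [f [s hs]], y as [g [t ht]]; simpl. exists (s ++ t).
  intros i H. apply in_or_app.
  destruct (classic (f i = gone (A i))) as [E|E].
  - right. apply ht. intro E'. apply H. rewrite E, E'. apply gmul1.
  - left. apply hs, E.
Defined.

Definition dinv (x : dcar) : dcar.
Proof.
  refine (exist _ (fun i => ginv (proj1_sig x i)) _).
  destruct x as [f [s hs]]; simpl. exists s.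
  intros i H. apply hs. intro E. apply H. rewrite E. apply ginv1.
Defined.

Definition done : dcar.
Proof.
  refine (exist _ (fun i => gone (A i)) _). exists nil. intros i H. now apply H.
Defined.

Lemma dmulE x y i : proj1_sig (dmul x y) i = gmul (proj1_sig x i) (proj1_sig y i).
Proof. reflexivity. Qed.
Lemma dinvE x i : proj1_sig (dinv x) i = ginv (proj1_sig x i).
Proof. reflexivity. Qed.
Lemma doneE i : proj1_sig done i = gone (A i).
Proof. reflexivity. Qed.

Definition dsum : Group.
Proof.
  refine (@MkGroup dcar dmul dinv done _ _ _ _ _); intros;
    apply dext; intro i; rewrite ?dmulE, ?dinvE, ?doneE, ?dmulE.
  - apply gmulA.
  - apply gmul1.
  - apply gmulg1.
  - apply gmulV.
  - apply gmulgV.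
Defined.
End DSum.

(** * Restricted wreath product  A wr Z = (⊕_{i∈Z} A) ⋊ Z, Z acting by shift *)
Section Wreath.
Variable A : Group.
Let D := dcar (fun _ : Z => A).

Definition zshift (m : Z) (x : D) : D.
Proof.
  refine (exist _ (fun i => proj1_sig x (i - m)%Z) _).
  destruct x as [f [s hs]]; simpl. exists (map (fun j => (j + m)%Z) s).
  intros i H. replace i with ((i - m) + m)%Z by lia. apply (in_map (fun j => (j + m)%Z)). apply hs, H.
Defined.

Lemma zshiftE m x i : proj1_sig (zshift m x) i = proj1_sig x (i - m)%Z.
Proof. reflexivity. Qed.

Definition wmul (x y : D * Z) : D * Z :=
  (dmul (fst x) (zshift (snd x) (fst y)), (snd x + snd y)%Z).
Definition winv (x : D * Z) : D * Z :=
  (zshift (- snd x) (dinv (fst x)), (- snd x)%Z).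
Definition wone : D * Z := (done (fun _ : Z => A), 0%Z).

Definition wreath : Group.
Proof.
  refine (@MkGroup (D * Z)%type wmul winv wone _ _ _ _ _).
  - intros [f m] [g n] [h p]; unfold wmul; simpl. f_equal; [|lia].
    apply dext; intro i. rewrite !dmulE, !zshiftE, !dmulE, !zshiftE.
    replace (i - m - n)%Z with (i - (m + n))%Z by lia. apply gmulA.
  - intros [f m]; unfold wmul, wone; simpl. f_equal.
    apply dext; intro i. rewrite dmulE, zshiftE, doneE, Z.sub_0_r. apply gmul1.
  - intros [f m]; unfold wmul, wone; simpl. f_equal; [|lia].
    apply dext; intro i. rewrite dmulE, zshiftE, doneE. apply gmulg1.
  - intros [f m]; unfold wmul, winv, wone; simpl. f_equal; [|lia].
    apply dext; intro i. rewrite dmulE, !zshiftE, dinvE, doneE. apply gmulV.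
  - intros [f m]; unfold wmul, winv, wone; simpl. f_equal; [|lia].
    apply dext; intro i. rewrite dmulE, !zshiftE, dinvE, doneE.
    replace (i - m - - m)%Z with i by lia. apply gmulgV.
Defined.
End Wreath.

Definition trivial_group : Group.
Proof.
  refine (@MkGroup unit (fun _ _ => tt) (fun _ => tt) tt _ _ _ _ _);
    intros; repeat match goal with u : unit |- _ => destruct u end; reflexivity.
Defined.

Fixpoint Gn (n : nat) : Group :=
  match n with
  | 0 => trivial_group
  | S k => dsum (fun _ : Z => wreath (Gn k))
  end.

(** * The class R: smallest non-empty class closed under A |-> A wr Z,
      bounded direct sums, and subgroups *)
Definition countable (I : Type) : Prop :=
  exists g : I -> nat, forall i j, g i = g j -> i = j.

Definition nonempty_class (C : Group -> Prop) : Prop := exists G, C G.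
Definition closed_wreath (C : Group -> Prop) : Prop :=
  forall A, C A -> C (wreath A).
Definition closed_bdsum (C : Group -> Prop) : Prop :=
  forall (I : Type) (A : I -> Group), countable I ->
    (exists d, forall i, derived_length_le (A i) d) ->
    (forall i, C (A i)) -> C (dsum A).
Definition closed_sub (C : Group -> Prop) : Prop :=
  forall G H : Group, embeds H G -> C G -> C H.

Definition in_R (H : Group) : Prop :=
  forall C : Group -> Prop, nonempty_class C -> closed_wreath C ->
    closed_bdsum C -> closed_sub C -> C H.

From Stdlib Require Import ZArith List Lia Classical ProofIrrelevance ClassicalEpsilon Cantor Wf_nat.
Set Implicit Arguments.
Unset Strict Implicit.

(* The groups G_n lie in every class closed under the three operations, hence so
   do their subgroups. Conversely, groups embeddable in some G_n are closed under
   subgroups and under A |-> A wr Z (G_m wr Z is a summand of G_(m+1)). For bounded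
   direct sums the key is that a subgroup of derived length <= d of some G_n already
   embeds in G_d. The groups G whose subgroups of derived length <= d embed in G_d
   for every d include the trivial group and are closed under countable direct sums
   (embed each coordinate projection, then flatten a sum of copies of G_d into G_d)
   and under passing from the base of A wr Z to A wr Z: a subgroup H either lies in
   the base, or its Z-component has image kZ with k > 0; then the base coordinates
   in the window [0, k) embed H into B wr Z for a subgroup B of the base of derived
   length <= d - 1, every element of B being the image of a commutator [x, t^N]. *)

Section GroupTheory.
Variable G : Group.
Implicit Types a x y z : G.

Lemma gmul_cancel_l x y z : gmul x y = gmul x z -> y = z.
Proof.
  intro E. rewrite <- (gmul1 G y), <- (gmul1 G z), <- (gmulV G x), <- !gmulA, E.
  reflexivity.
Qed.

Lemma gmul_cancel_r x y z : gmul y x = gmul z x -> y = z.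
Proof.
  intro E. rewrite <- (gmulg1 G y), <- (gmulg1 G z), <- (gmulgV G x), !gmulA, E.
  reflexivity.
Qed.

Lemma ginv_unique x y : gmul x y = gone G -> y = ginv x.
Proof. intro E. apply (@gmul_cancel_l x). rewrite E, gmulgV. reflexivity. Qed.

Lemma gone_unique x y : gmul x y = x -> y = gone G.
Proof. intro E. apply (@gmul_cancel_l x). rewrite gmulg1. exact E. Qed.

Lemma ginvK x : ginv (ginv x) = x.
Proof. symmetry. apply ginv_unique, gmulV. Qed.

Lemma conjg_eq_one a x : gmul (gmul (ginv a) x) a = gone G <-> x = gone G.
Proof.
  split; intro E.
  - apply (@gmul_cancel_l (ginv a)), (@gmul_cancel_r a).
    rewrite E, gmulg1, gmulV. reflexivity.
  - subst. rewrite gmulg1. apply gmulV.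
Qed.

End GroupTheory.

Section Homomorphism.
Variables (G K : Group) (f : G -> K).
Hypothesis hf : is_hom f.

Lemma hom_one : f (gone G) = gone K.
Proof. apply (@gone_unique _ (f (gone G))). rewrite <- hf, gmul1. reflexivity. Qed.

Lemma hom_inv x : f (ginv x) = ginv (f x).
Proof. apply ginv_unique. rewrite <- hf, gmulgV. apply hom_one. Qed.

Lemma hom_commg a b : f (commg a b) = commg (f a) (f b).
Proof. unfold commg. rewrite !hf, !hom_inv. reflexivity. Qed.

Lemma hom_derived k x : derived G k x -> derived K k (f x).
Proof.
  revert x; induction k as [|k IH]; intros x Dx; simpl in *; [exact I|].
  induction Dx as [x [a [b [Ha [Hb ->]]]]| |x y _ IHx _ IHy|x _ IHx].
  - apply gen_base. exists (f a), (f b). rewrite hom_commg. auto.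
  - rewrite hom_one. apply gen_one.
  - rewrite hf. apply gen_mul; assumption.
  - rewrite hom_inv. apply gen_inv; assumption.
Qed.

End Homomorphism.

Lemma embeds_refl A : embeds A A.
Proof. exists (fun x => x). split; [intros x y; reflexivity | auto]. Qed.

Lemma embeds_trans A B C : embeds A B -> embeds B C -> embeds A C.
Proof.
  intros [f [hf jf]] [g [hg jg]]. exists (fun x => g (f x)). split.
  - intros x y. rewrite hf, hg. reflexivity.
  - intros x y E. apply jf, jg, E.
Qed.

Lemma gen_mono (G : Group) (P Q : G -> Prop) :
  (forall x, P x -> Q x) -> forall x, gen P x -> gen Q x.
Proof.
  intros PQ x Gx. induction Gx.
  - apply gen_base, PQ; assumption.
  - apply gen_one.
  - apply gen_mul; assumption.
  - apply gen_inv; assumption.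
Qed.

Lemma derived_succ (G : Group) k x : derived G (S k) x -> derived G k x.
Proof.
  revert x; induction k as [|k IH]; intros x Dx; [exact I|].
  revert Dx. apply gen_mono.
  intros y [a [b [Ha [Hb E]]]]. exists a, b. split; [apply IH, Ha|]. split; [apply IH, Hb|exact E].
Qed.

Lemma derived_antitone (G : Group) k m x : k <= m -> derived G m x -> derived G k x.
Proof. induction 1; auto using derived_succ. Qed.

Definition is_trivial (G : Group) : Prop := forall x : G, x = gone G.

Lemma trivial_embeds H G : is_trivial H -> embeds H G.
Proof.
  intro T. exists (fun _ => gone G). split.
  - intros x y. rewrite gmul1. reflexivity.
  - intros x y _. rewrite (T x), (T y). reflexivity.
Qed.

Lemma derived_length_le0_trivial G : derived_length_le G 0 -> is_trivial G.
Proof. intros D x. apply D. exact I. Qed.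

Lemma embeds_trivial_group H : embeds H trivial_group -> is_trivial H.
Proof. intros [f [_ jf]] x. apply jf. destruct (f x), (f (gone H)). reflexivity. Qed.

Section Subgroup.
Variables (G : Group) (P : G -> Prop).
Hypotheses (P1 : P (gone G)) (PM : forall x y, P x -> P y -> P (gmul x y))
           (PV : forall x, P x -> P (ginv x)).

Lemma sub_ext (a b : {x : G | P x}) : proj1_sig a = proj1_sig b -> a = b.
Proof.
  destruct a as [a ha], b as [b hb]; simpl; intro E; subst. f_equal. apply proof_irrelevance.
Qed.

Definition subgroup : Group.
Proof.
  refine (@MkGroup {x : G | P x}
    (fun a b => exist _ (gmul (proj1_sig a) (proj1_sig b)) (PM (proj2_sig a) (proj2_sig b)))
    (fun a => exist _ (ginv (proj1_sig a)) (PV (proj2_sig a)))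
    (exist _ (gone G) P1) _ _ _ _ _); intros; apply sub_ext; simpl.
  - apply gmulA.
  - apply gmul1.
  - apply gmulg1.
  - apply gmulV.
  - apply gmulgV.
Defined.

Lemma subgroup_embeds : embeds subgroup G.
Proof. exists (@proj1_sig _ _). split; [intros a b; reflexivity | exact sub_ext]. Qed.

End Subgroup.

Section Image.
Variables (G K : Group) (f : G -> K).
Hypothesis hf : is_hom f.

Definition in_image (y : K) : Prop := exists x, f x = y.

Lemma in_image_one : in_image (gone K).
Proof. exists (gone G). apply hom_one, hf. Qed.

Lemma in_image_mul y z : in_image y -> in_image z -> in_image (gmul y z).
Proof. intros [a <-] [b <-]. exists (gmul a b). apply hf. Qed.

Lemma in_image_inv y : in_image y -> in_image (ginv y).
Proof. intros [a <-]. exists (ginv a). apply hom_inv, hf. Qed.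

Definition image : Group := subgroup in_image_one in_image_mul in_image_inv.

Lemma image_derived k (y : image) :
  derived image k y -> exists x, derived G k x /\ f x = proj1_sig y.
Proof.
  revert y; induction k as [|k IH]; intros y Dy.
  - destruct (proj2_sig y) as [x E]. exists x. split; [exact I | exact E].
  - induction Dy as [y [a [b [Ha [Hb ->]]]]| |y z _ IHy _ IHz|y _ IHy].
    + destruct (IH a Ha) as [xa [Da Ea]], (IH b Hb) as [xb [Db Eb]].
      exists (commg xa xb). split.
      * apply gen_base. exists xa, xb. auto.
      * rewrite (hom_commg hf), Ea, Eb. reflexivity.
    + exists (gone G). split; [apply gen_one | apply hom_one, hf].
    + destruct IHy as [a [Da Ea]], IHz as [b [Db Eb]]. exists (gmul a b). split.
      * apply gen_mul; assumption.
      * rewrite hf, Ea, Eb. reflexivity.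
    + destruct IHy as [a [Da Ea]]. exists (ginv a). split.
      * apply gen_inv; assumption.
      * rewrite (hom_inv hf), Ea. reflexivity.
Qed.

Lemma image_derived_length_le d : derived_length_le G d -> derived_length_le image d.
Proof.
  intros DG y Dy. destruct (image_derived Dy) as [x [Dx E]]. apply sub_ext. simpl.
  rewrite <- E, (DG x Dx). apply hom_one, hf.
Qed.

End Image.

Lemma dsum_derived_length_le I (A : I -> Group) d :
  (forall i, derived_length_le (A i) d) -> derived_length_le (dsum A) d.
Proof.
  intros DA x Dx. apply dext. intro i.
  apply DA, (@hom_derived (dsum A) (A i) (fun y => proj1_sig y i) (fun y z => eq_refl)), Dx.
Qed.

Lemma embeds_dsum_const I (W : Group) (i0 : I) : embeds W (dsum (fun _ : I => W)).
Proof.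
  unshelve eexists.
  - intro a. refine (exist _ (fun i => if excluded_middle_informative (i = i0) then a else gone W) _).
    exists (cons i0 nil). intros i Hi.
    destruct (excluded_middle_informative (i = i0)); [left; auto | now elim Hi].
  - split.
    + intros a b. apply dext. intro i. simpl.
      destruct (excluded_middle_informative (i = i0)); [reflexivity | symmetry; apply gmul1].
    + intros a b E. assert (E' := f_equal (fun x => proj1_sig x i0) E). simpl in E'.
      destruct (excluded_middle_informative (i0 = i0)); [exact E' | now elim n].
Qed.

Lemma dsum_embeds I (A B : I -> Group) :
  (forall i, embeds (A i) (B i)) -> embeds (dsum A) (dsum B).
Proof.
  intro AB.
  pose (F i := proj1_sig (constructive_indefinite_description _ (AB i))).
  assert (HF : forall i, is_hom (F i) /\ forall x y, F i x = F i y -> x = y)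
    by (intro i; exact (proj2_sig (constructive_indefinite_description _ (AB i)))).
  assert (F1 : forall i, F i (gone (A i)) = gone (B i)) by (intro i; apply hom_one, (HF i)).
  unshelve eexists.
  - intro x. refine (exist _ (fun i => F i (proj1_sig x i)) _).
    destruct x as [g [s hs]]. exists s. intros i Hi. apply hs. intro E. apply Hi.
    simpl. rewrite E. apply F1.
  - split.
    + intros x y. apply dext. intro i. apply (HF i).
    + intros x y E. apply dext. intro i. apply (HF i).
      exact (f_equal (fun z => proj1_sig z i) E).
Qed.

Lemma dsum_reindex (J K : Type) (W : Group) (c : J -> K) :
  (forall a b, c a = c b -> a = b) ->
  embeds (dsum (fun _ : J => W)) (dsum (fun _ : K => W)).
Proof.
  intro cinj.
  pose (pull (x : dsum (fun _ : J => W)) (k : K) :=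
    match excluded_middle_informative (exists j, c j = k) with
    | left p => proj1_sig x (proj1_sig (constructive_indefinite_description _ p))
    | right _ => gone W end).
  assert (pull_c : forall x j, pull x (c j) = proj1_sig x j).
  { intros x j. unfold pull. destruct (excluded_middle_informative _) as [p|n].
    - destruct (constructive_indefinite_description _ p) as [j' E]. simpl.
      apply cinj in E. subst. reflexivity.
    - elim n. eauto. }
  unshelve eexists.
  - intro x. refine (exist _ (pull x) _).
    destruct (proj2_sig x) as [s hs]. exists (map c s). intros k Hk. unfold pull in Hk.
    destruct (excluded_middle_informative _) as [p|n]; [|now elim Hk].
    destruct (constructive_indefinite_description _ p) as [j E]. simpl in Hk. subst.
    apply in_map, hs, Hk.
  - split.
    + intros x y. apply dext. intro k. simpl. unfold pull.
      destruct (excluded_middle_informative _); [reflexivity | symmetry; apply gmul1].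
    + intros x y E. apply dext. intro j. rewrite <- !pull_c.
      exact (f_equal (fun z => proj1_sig z (c j)) E).
Qed.

Lemma dsum_flatten (I J : Type) (W : Group) :
  embeds (dsum (fun _ : I => dsum (fun _ : J => W))) (dsum (fun _ : (I * J)%type => W)).
Proof.
  unshelve eexists.
  - intro x. refine (exist _ (fun p => proj1_sig (proj1_sig x (fst p)) (snd p)) _).
    destruct x as [g [s hs]]. simpl.
    assert (Supp : exists l, forall i j, In i s -> proj1_sig (g i) j <> gone W -> In (i, j) l).
    { clear hs. induction s as [|i0 s [l Hl]].
      - exists nil. intros i j [].
      - destruct (proj2_sig (g i0)) as [t ht]. exists (map (fun j => (i0, j)) t ++ l).
        intros i j [<-|Hi] Hj; apply in_or_app.
        + left. apply in_map, ht, Hj.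
        + right. apply Hl; assumption. }
    destruct Supp as [l Hl]. exists l. intros [i j] Hij. apply Hl; [|exact Hij].
    apply hs. intro E. apply Hij. simpl. rewrite E. reflexivity.
  - split.
    + intros x y. apply dext. intros [i j]. reflexivity.
    + intros x y E. apply dext. intro i. apply dext. intro j.
      exact (f_equal (fun w => proj1_sig w (i, j)) E).
Qed.

Lemma countable_Z : countable Z.
Proof.
  exists (fun z => Cantor.to_nat (Z.to_nat z, Z.to_nat (- z))).
  intros a b E. apply Cantor.to_nat_inj in E. injection E. lia.
Qed.

Lemma countable_prod I J : countable I -> countable J -> countable (I * J).
Proof.
  intros [f fi] [g gi]. exists (fun p => Cantor.to_nat (f (fst p), g (snd p))).
  intros [i j] [i' j'] E. apply Cantor.to_nat_inj in E. simpl in E.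
  injection E as Ei Ej. apply fi in Ei. apply gi in Ej. subst. reflexivity.
Qed.

Lemma dsum_countable_embeds_Z I (W : Group) :
  countable I -> embeds (dsum (fun _ : I => dsum (fun _ : Z => W))) (dsum (fun _ : Z => W)).
Proof.
  intro cI. destruct (countable_prod cI countable_Z) as [g gi].
  eapply embeds_trans; [apply dsum_flatten|].
  apply dsum_reindex with (c := fun p => Z.of_nat (g p)).
  intros p q E. apply gi, Nat2Z.inj, E.
Qed.

Lemma embeds_dsum_projections H I (A : I -> Group) : embeds H (dsum A) ->
  exists P : I -> Group, embeds H (dsum P) /\ forall i, embeds (P i) (A i) /\
    forall d, derived_length_le H d -> derived_length_le (P i) d.
Proof.
  intros [e [he je]].
  pose (pi i (h : H) := proj1_sig (e h) i).
  assert (hpi : forall i, is_hom (pi i)) by (intros i x y; unfold pi; rewrite he; reflexivity).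
  exists (fun i => image (hpi i)). split.
  - unshelve eexists.
    + intro h. refine (exist _ (fun i => exist _ (pi i h) (ex_intro _ h eq_refl)) _).
      destruct (proj2_sig (e h)) as [s hs]. exists s. intros i Hi. apply hs.
      intro E. apply Hi. apply sub_ext. exact E.
    + split.
      * intros x y. apply dext. intro i. apply sub_ext. apply hpi.
      * intros x y E. apply je, dext. intro i.
        exact (f_equal (fun z => proj1_sig (proj1_sig z i)) E).
  - intro i. split; [apply subgroup_embeds | apply image_derived_length_le].
Qed.

Section WreathBase.
Variable A : Group.
Let D := dsum (fun _ : Z => A).
Implicit Types a b x : wreath A.

Lemma zshift0 (g : D) : zshift 0 g = g.
Proof. apply dext. intro i. rewrite zshiftE, Z.sub_0_r. reflexivity. Qed.

Lemma wmul_base a b : snd a = 0%Z -> gmul a b = (dmul (fst a) (fst b), snd b).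
Proof. destruct a as [f m]. simpl. intros ->. unfold wmul. simpl. rewrite zshift0. reflexivity. Qed.

Lemma winv_base a : snd a = 0%Z -> ginv a = (dinv (fst a), 0%Z).
Proof. destruct a as [f m]. simpl. intros ->. unfold winv. simpl. rewrite zshift0. reflexivity. Qed.

Lemma wcommg_base a b : snd a = 0%Z -> snd b = 0%Z ->
  commg a b = (commg (fst a : D) (fst b : D), 0%Z).
Proof.
  intros Ha Hb. unfold commg.
  rewrite (wmul_base _ Ha), !wmul_base, !winv_base; simpl; rewrite ?Ha, ?Hb; reflexivity.
Qed.

Lemma wconj_base_eq_one (w y : wreath A) j : snd y = 0%Z ->
  proj1_sig (fst (gmul (gmul (ginv w) y) w)) j = gone A <->
  proj1_sig (fst y) (j + snd w)%Z = gone A.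
Proof.
  destruct w as [f s], y as [g n]. simpl. intros ->. simpl.
  replace (j - - s)%Z with (j + s)%Z by lia. replace (j - (- s + 0))%Z with (j + s)%Z by lia.
  apply conjg_eq_one.
Qed.

Lemma wreath_derived k x :
  derived (wreath A) (S k) x -> snd x = 0%Z /\ derived D k (fst x).
Proof.
  revert x; induction k as [|k IH]; intros x Dx.
  - split; [|exact I].
    induction Dx as [x [[f m] [[g n] [_ [_ ->]]]]| |[f m] [g n] _ IHx _ IHy|[f m] _ IHx];
      simpl in *; lia.
  - change (gen (fun x => exists a b, derived (wreath A) (S k) a /\
      derived (wreath A) (S k) b /\ x = commg a b) x) in Dx.
    induction Dx as [x [a [b [Ha [Hb ->]]]]| |x y _ [x0 Dx] _ [y0 Dy]|x _ [x0 Dx]].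
    + destruct (IH a Ha) as [a0 Da], (IH b Hb) as [b0 Db].
      rewrite (wcommg_base a0 b0). split; [reflexivity|].
      apply gen_base. exists (fst a), (fst b). auto.
    + split; [reflexivity | exact (@gen_one D _)].
    + rewrite (wmul_base _ x0). split; [exact y0 | exact (gen_mul Dx Dy)].
    + rewrite (winv_base x0). split; [reflexivity | exact (gen_inv Dx)].
Qed.

Lemma wreath_derived_length_le d :
  derived_length_le A d -> derived_length_le (wreath A) (S d).
Proof.
  intros DA [f m] Dx. destruct (wreath_derived Dx) as [E Df]. simpl in E, Df. subst m.
  rewrite (dsum_derived_length_le (fun _ => DA) Df). reflexivity.
Qed.

End WreathBase.

Lemma wreath_embeds A B : embeds A B -> embeds (wreath A) (wreath B).
Proof.
  intros [f [hf jf]].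
  assert (f1 : f (gone A) = gone B) by apply (hom_one hf).
  unshelve eexists.
  - intros [g m]. refine (exist _ (fun i => f (proj1_sig g i)) _, m).
    destruct (proj2_sig g) as [s hs]. exists s. intros i Hi. apply hs.
    intro E. apply Hi. rewrite E. exact f1.
  - split.
    + intros [g m] [h n]. simpl. unfold wmul. simpl. f_equal.
      apply dext. intro i. apply hf.
    + intros [g m] [h n] E. injection E as E1 E2. subst n. f_equal.
      apply dext. intro i. apply jf. exact (f_equal (fun z => z i) E1).
Qed.

Lemma wreath_Gn_embeds m : embeds (wreath (Gn m)) (Gn (S m)).
Proof. exact (embeds_dsum_const _ 0%Z). Qed.

Lemma Gn_derived_length_le n : derived_length_le (Gn n) n.
Proof.
  induction n as [|n IH].
  - intros [] _. reflexivity.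
  - apply dsum_derived_length_le. intro i. apply wreath_derived_length_le, IH.
Qed.

Lemma Gn_in_class (C : Group -> Prop) : nonempty_class C -> closed_wreath C ->
  closed_bdsum C -> closed_sub C -> forall n, C (Gn n).
Proof.
  intros [G0 CG0] Cw Cd Cs n. induction n as [|n IH].
  - apply (Cs G0); [apply trivial_embeds; intros [] | exact CG0]. reflexivity.
  - apply Cd.
    + apply countable_Z.
    + exists (S n). intro i. apply wreath_derived_length_le, Gn_derived_length_le.
    + intro i. apply Cw, IH.
Qed.

Fixpoint npow (G : Group) (g : G) (n : nat) : G :=
  match n with O => gone G | S n => gmul (npow g n) g end.

Section Powers.
Variables (G : Group) (t : G).

Definition zpow (i : Z) : G :=
  if (0 <=? i)%Z then npow t (Z.to_nat i) else npow (ginv t) (Z.to_nat (- i)).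

Lemma zpow_succ i : zpow (i + 1) = gmul (zpow i) t.
Proof.
  unfold zpow. destruct (Z.leb_spec 0 i), (Z.leb_spec 0 (i + 1)); try lia.
  - replace (Z.to_nat (i + 1)) with (S (Z.to_nat i)) by lia. reflexivity.
  - replace i with (-1)%Z by lia. simpl. rewrite gmul1. symmetry. apply gmulV.
  - replace (Z.to_nat (- i)) with (S (Z.to_nat (- (i + 1)))) by lia. simpl.
    rewrite <- gmulA, gmulV, gmulg1. reflexivity.
Qed.

Lemma zpow_pred i : zpow (i - 1) = gmul (zpow i) (ginv t).
Proof.
  replace (zpow i) with (zpow ((i - 1) + 1)) by (f_equal; lia).
  rewrite zpow_succ, <- gmulA, gmulgV, gmulg1. reflexivity.
Qed.

Lemma zpow_add a b : zpow (a + b) = gmul (zpow a) (zpow b).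
Proof.
  revert a. induction b as [|b IH|b IH] using Z.peano_ind; intro a.
  - rewrite Z.add_0_r, gmulg1. reflexivity.
  - rewrite <- !Z.add_1_r, Z.add_assoc, !zpow_succ, IH, gmulA. reflexivity.
  - rewrite <- !Z.sub_1_r, Z.add_sub_assoc, !zpow_pred, IH, gmulA. reflexivity.
Qed.

Lemma zpow1 : zpow 1 = t.
Proof. apply gmul1. Qed.

Lemma zpow_opp a : zpow (- a) = ginv (zpow a).
Proof. apply ginv_unique. rewrite <- zpow_add, Z.add_opp_diag_r. reflexivity. Qed.

Definition conjz (i : Z) (x : G) : G := gmul (gmul (zpow (- i)) x) (zpow i).

Lemma conjz1 x : conjz 1 x = gmul (gmul (ginv t) x) t.
Proof. unfold conjz. rewrite zpow_opp, zpow1. reflexivity. Qed.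

Lemma conjzM i x y : conjz i (gmul x y) = gmul (conjz i x) (conjz i y).
Proof.
  unfold conjz. rewrite !gmulA, <- (gmulA _ (gmul (zpow (- i)) x) (zpow i)), <- zpow_add.
  rewrite Z.add_opp_diag_r, gmulg1. reflexivity.
Qed.

Lemma conjzV i x : conjz i (ginv x) = ginv (conjz i x).
Proof.
  apply ginv_unique. rewrite <- conjzM, gmulgV. unfold conjz.
  rewrite gmulg1, <- zpow_add, Z.add_opp_diag_l. reflexivity.
Qed.

Lemma conjz_add i j x : conjz i (conjz j x) = conjz (i + j) x.
Proof.
  unfold conjz. rewrite !gmulA, <- zpow_add, <- gmulA, <- zpow_add.
  f_equal; f_equal; [f_equal|]; lia.
Qed.

End Powers.

Section IntegerValuedHom.
Variables (G : Group) (phi : G -> Z).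
Hypothesis phiM : forall x y, phi (gmul x y) = (phi x + phi y)%Z.

Lemma zhom_one : phi (gone G) = 0%Z.
Proof. assert (E := phiM (gone G) (gone G)). rewrite gmul1 in E. lia. Qed.

Lemma zhom_inv x : phi (ginv x) = (- phi x)%Z.
Proof. assert (E := phiM (ginv x) x). rewrite gmulV, zhom_one in E. lia. Qed.

Lemma zhom_zpow t i : phi (zpow t i) = (i * phi t)%Z.
Proof.
  induction i as [|i IH|i IH] using Z.peano_ind.
  - apply zhom_one.
  - rewrite <- Z.add_1_r, zpow_succ, phiM, IH. lia.
  - rewrite <- Z.sub_1_r, zpow_pred, phiM, IH, zhom_inv. lia.
Qed.

Lemma zhom_conjz t i x : phi (conjz t i x) = phi x.
Proof. unfold conjz. rewrite !phiM, !zhom_zpow. lia. Qed.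

Lemma zhom_derived1 x : derived G 1 x -> phi x = 0%Z.
Proof.
  induction 1 as [x [a [b [_ [_ ->]]]]| |x y _ IHx _ IHy|x _ IHx].
  - unfold commg. rewrite !phiM, !zhom_inv. lia.
  - apply zhom_one.
  - rewrite phiM. lia.
  - rewrite zhom_inv. lia.
Qed.

End IntegerValuedHom.

Lemma Z_fresh (s : list Z) : exists N, ~ In N s.
Proof.
  exists (Z.of_nat (S (list_max (map Z.abs_nat s)))). intro HN.
  apply (in_map Z.abs_nat) in HN. rewrite Zabs2Nat.id in HN.
  assert (F := proj1 (list_max_le (map Z.abs_nat s) _) (le_n _)). rewrite Forall_forall in F.
  apply F in HN. lia.
Qed.

Section KaloujnineKrasner.
Variables (H B : Group) (phi : H -> Z) (t : H) (rho : H -> B).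
Hypothesis phiM : forall x y, phi (gmul x y) = (phi x + phi y)%Z.
Hypothesis phit : phi t = 1%Z.
Let K (x : H) : Prop := phi x = 0%Z.
Hypothesis rhoM : forall x y, K x -> K y -> rho (gmul x y) = gmul (rho x) (rho y).
Hypothesis rho_supp :
  forall x, K x -> exists s, forall i, rho (conjz t i x) <> gone B -> In i s.
Hypothesis rho_faithful :
  forall x, K x -> (forall i, rho (conjz t i x) = gone B) -> x = gone H.

Lemma K_one : K (gone H).
Proof. apply zhom_one, phiM. Qed.

Lemma K_mul x y : K x -> K y -> K (gmul x y).
Proof. unfold K. rewrite phiM. lia. Qed.

Lemma K_inv x : K x -> K (ginv x).
Proof. unfold K. rewrite (zhom_inv phiM). lia. Qed.

Lemma K_conjz i x : K x -> K (conjz t i x).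
Proof. unfold K. rewrite (zhom_conjz phiM). auto. Qed.

Lemma rho_one : rho (gone H) = gone B.
Proof.
  apply (@gone_unique _ (rho (gone H))). rewrite <- rhoM by apply K_one.
  rewrite gmul1. reflexivity.
Qed.

Lemma rho_inv x : K x -> rho (ginv x) = ginv (rho x).
Proof.
  intro Kx. apply ginv_unique. rewrite <- rhoM by auto using K_inv.
  rewrite gmulgV. apply rho_one.
Qed.

Lemma rho_commg a b : K a -> K b -> rho (commg a b) = commg (rho a) (rho b).
Proof. intros Ka Kb. unfold commg. rewrite !rhoM, !rho_inv; auto using K_mul, K_inv. Qed.

Definition in_rho_range (y : B) : Prop := exists x, K x /\ rho x = y.

Lemma in_rho_range_one : in_rho_range (gone B).
Proof. exists (gone H). split; [apply K_one | apply rho_one]. Qed.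

Lemma in_rho_range_mul y z : in_rho_range y -> in_rho_range z -> in_rho_range (gmul y z).
Proof. intros [a [Ka <-]] [b [Kb <-]]. exists (gmul a b). auto using K_mul. Qed.

Lemma in_rho_range_inv y : in_rho_range y -> in_rho_range (ginv y).
Proof. intros [a [Ka <-]]. exists (ginv a). auto using K_inv, rho_inv. Qed.

Definition rho_range : Group :=
  subgroup in_rho_range_one in_rho_range_mul in_rho_range_inv.

Definition kappa (h : H) : H := gmul h (zpow t (- phi h)).

Lemma K_kappa h : K (kappa h).
Proof. unfold K, kappa. rewrite phiM, (zhom_zpow phiM), phit. lia. Qed.

Lemma kappa_mul h h' : kappa (gmul h h') = gmul (kappa h) (conjz t (- phi h) (kappa h')).
Proof.
  unfold kappa, conjz. rewrite Z.opp_involutive, phiM, !gmulA.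
  rewrite <- (gmulA _ h (zpow t (- phi h))), <- zpow_add, Z.add_opp_diag_l, gmulg1.
  rewrite <- (gmulA _ (gmul h h') (zpow t (- phi h'))), <- zpow_add.
  do 2 f_equal. lia.
Qed.

(* With kappa h in the kernel K, the Kaloujnine-Krasner map
   h |-> ((i |-> rho (t^-i (kappa h) t^i)), phi h) embeds H into rho(K) wr Z. *)
Definition kk_base (h : H) : dsum (fun _ : Z => rho_range).
Proof.
  refine (exist _ (fun i => exist _ (rho (conjz t i (kappa h)))
                             (ex_intro _ _ (conj (K_conjz i (K_kappa h)) eq_refl))) _).
  destruct (rho_supp (K_kappa h)) as [s hs]. exists s. intros i Hi. apply hs.
  intro E. apply Hi. apply sub_ext. exact E.
Defined.

Definition kk_embedding (h : H) : wreath rho_range := (kk_base h, phi h).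

Lemma kk_embedding_hom : is_hom kk_embedding.
Proof.
  intros h h'. unfold kk_embedding. simpl. unfold wmul. simpl. f_equal; [|apply phiM].
  apply dext. intro i. apply sub_ext. simpl.
  rewrite kappa_mul, conjzM, conjz_add, rhoM by auto using K_conjz, K_kappa.
  rewrite Z.add_opp_r. reflexivity.
Qed.

Lemma kk_embedding_inj h h' : kk_embedding h = kk_embedding h' -> h = h'.
Proof.
  unfold kk_embedding. intro E. injection E as Ebase Ephi.
  assert (Ei : forall i, rho (conjz t i (kappa h)) = rho (conjz t i (kappa h'))).
  { intro i. exact (f_equal (fun z => proj1_sig (z i)) Ebase). }
  assert (Ekappa : kappa h = kappa h').
  { apply (@gmul_cancel_r _ (ginv (kappa h'))). rewrite gmulgV.
    apply rho_faithful; [auto using K_mul, K_inv, K_kappa|]. intro i.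
    rewrite conjzM, conjzV, rhoM, rho_inv, Ei, gmulgV; auto using K_conjz, K_inv, K_kappa. }
  unfold kappa in Ekappa. rewrite Ephi in Ekappa. exact (gmul_cancel_r Ekappa).
Qed.

Lemma kk_embeds : embeds H (wreath rho_range).
Proof. exists kk_embedding. split; [apply kk_embedding_hom | apply kk_embedding_inj]. Qed.

Lemma K_derived1 k x : derived H (S k) x -> K x.
Proof. intro Dx. apply (zhom_derived1 phiM). revert Dx. apply derived_antitone. lia. Qed.

(* Every rho x is the image of the commutator [x^-1, t^N] = x (t^-N x^-1 t^N)
   for N outside the finite support of i |-> rho (t^-i x^-1 t^i). *)
Lemma rho_range_commutator (y : rho_range) :
  exists x, derived H 1 x /\ rho x = proj1_sig y.
Proof.
  destruct (proj2_sig y) as [x [Kx <-]].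
  destruct (rho_supp (K_inv Kx)) as [s hs]. destruct (Z_fresh s) as [N HN].
  assert (R : rho (conjz t N (ginv x)) = gone B).
  { apply NNPP. intro NE. exact (HN (hs N NE)). }
  exists (commg (ginv x) (zpow t N)). split.
  - apply gen_base. eauto.
  - assert (C : commg (ginv x) (zpow t N) = gmul x (conjz t N (ginv x))).
    { unfold commg, conjz. rewrite ginvK, <- zpow_opp, !gmulA. reflexivity. }
    rewrite C, rhoM, R, gmulg1; auto using K_conjz, K_inv.
Qed.

Lemma rho_range_derived j (y : rho_range) :
  derived rho_range j y -> exists x, derived H (S j) x /\ rho x = proj1_sig y.
Proof.
  revert y; induction j as [|j IH]; intros y Dy; [apply rho_range_commutator|].
  induction Dy as [y [a [b [Ha [Hb ->]]]]| |y z _ [a [Da Ea]] _ [b [Db Eb]]|y _ [a [Da Ea]]].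
  - destruct (IH a Ha) as [xa [Da Ea]], (IH b Hb) as [xb [Db Eb]].
    exists (commg xa xb). split.
    + apply gen_base. exists xa, xb. auto.
    + rewrite rho_commg, Ea, Eb by (eapply K_derived1; eassumption). reflexivity.
  - exists (gone H). split; [apply gen_one | apply rho_one].
  - exists (gmul a b). split; [apply gen_mul; assumption|].
    rewrite rhoM, Ea, Eb by (eapply K_derived1; eassumption). reflexivity.
  - exists (ginv a). split; [apply gen_inv; assumption|].
    rewrite rho_inv, Ea by (eapply K_derived1; eassumption). reflexivity.
Qed.

Lemma rho_range_derived_length_le d :
  derived_length_le H (S d) -> derived_length_le rho_range d.
Proof.
  intros DH y Dy. destruct (rho_range_derived Dy) as [x [Dx E]]. apply sub_ext. simpl.
  rewrite <- E, (DH x Dx). apply rho_one.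
Qed.

Lemma embeds_wreath_derived_subgroup d : derived_length_le H (S d) ->
  exists C, embeds C B /\ derived_length_le C d /\ embeds H (wreath C).
Proof.
  intro DH. exists rho_range. split; [apply subgroup_embeds|].
  split; [exact (rho_range_derived_length_le DH) | exact kk_embeds].
Qed.

End KaloujnineKrasner.

Definition dl_embedding (G : Group) : Prop :=
  forall H d, embeds H G -> derived_length_le H d -> embeds H (Gn d).

Lemma dl_embedding_trivial : dl_embedding trivial_group.
Proof. intros H d E _. apply trivial_embeds, embeds_trivial_group, E. Qed.

Lemma dl_embedding_dsum I (A : I -> Group) :
  countable I -> (forall i, dl_embedding (A i)) -> dl_embedding (dsum A).
Proof.
  intros cI QA H d EH DH. destruct d as [|d].
  { apply trivial_embeds, derived_length_le0_trivial, DH. }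
  destruct (embeds_dsum_projections EH) as [P [EP PA]].
  eapply embeds_trans; [exact EP|]. eapply embeds_trans; [|exact (dsum_countable_embeds_Z _ cI)].
  apply dsum_embeds. intro i. destruct (PA i) as [Ei Di]. exact (QA i _ _ Ei (Di _ DH)).
Qed.

Section WreathSubgroup.
Variables (A H : Group) (e : H -> wreath A).
Hypotheses (he : is_hom e) (je : forall x y, e x = e y -> x = y).
Let D := dsum (fun _ : Z => A).

Definition zpart (h : H) : Z := snd (e h).
Let coord (h : H) (j : Z) : A := proj1_sig (fst (e h)) j.

Lemma zpart_mul x y : zpart (gmul x y) = (zpart x + zpart y)%Z.
Proof. unfold zpart. rewrite he. reflexivity. Qed.

Lemma zpart_min_positive : (exists h, zpart h <> 0%Z) ->
  exists t, (0 < zpart t)%Z /\ forall h, ~ (0 < zpart h < zpart t)%Z.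
Proof.
  intros [h0 N0].
  pose (P n := exists h, zpart h = Z.of_nat (S n)).
  assert (P0 : exists n, P n).
  { exists (Z.to_nat (Z.abs (zpart h0)) - 1). destruct (Z.le_gt_cases 0 (zpart h0)).
    - exists h0. lia.
    - exists (ginv h0). rewrite (zhom_inv zpart_mul). lia. }
  destruct (dec_inh_nat_subset_has_unique_least_element P (fun n => classic (P n)) P0)
    as [n [[[t Et] nmin] _]].
  exists t. split; [lia|]. intros h Bh.
  assert (Ph : P (Z.to_nat (zpart h) - 1)) by (exists h; lia).
  apply nmin in Ph. lia.
Qed.

Variables (k : Z) (t : H).
Hypotheses (k_pos : (0 < k)%Z) (zpart_t : zpart t = k)
  (k_min : forall h, ~ (0 < zpart h < k)%Z).

Lemma zpart_divisible h : zpart h = (k * (zpart h / k))%Z.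
Proof.
  assert (DM := Z.div_mod (zpart h) k ltac:(lia)).
  assert (M := Z.mod_pos_bound (zpart h) k k_pos).
  destruct (Z.eq_dec (zpart h mod k) 0) as [E|NE]; [lia|].
  exfalso. apply (k_min (h := gmul h (zpow t (- (zpart h / k))))).
  rewrite zpart_mul, (zhom_zpow zpart_mul), zpart_t. lia.
Qed.

Definition zquot (h : H) : Z := (zpart h / k)%Z.

Lemma zquot_mul x y : zquot (gmul x y) = (zquot x + zquot y)%Z.
Proof.
  unfold zquot. apply (Z.mul_reg_l _ _ k); [lia|].
  rewrite <- zpart_divisible, zpart_mul, Z.mul_add_distr_l, <- !zpart_divisible. reflexivity.
Qed.

Lemma zquot_t : zquot t = 1%Z.
Proof. unfold zquot. rewrite zpart_t. apply Z.div_same. lia. Qed.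

Lemma zquot_eq0 x : zquot x = 0%Z -> zpart x = 0%Z.
Proof. unfold zquot. intro E. rewrite zpart_divisible, E. lia. Qed.

Definition window (h : H) : D.
Proof.
  refine (exist _ (fun j => if andb (0 <=? j)%Z (j <? k)%Z then coord h j else gone A) _).
  destruct (proj2_sig (fst (e h))) as [s hs]. exists s. intros j Hj. apply hs.
  intro E. apply Hj. destruct (andb _ _); [exact E | reflexivity].
Defined.

Lemma window_mul x y : zquot x = 0%Z -> zquot y = 0%Z ->
  window (gmul x y) = gmul (window x) (window y).
Proof.
  intros Kx _. apply dext. intro j. simpl. unfold coord.
  rewrite he, (wmul_base _ (zquot_eq0 Kx)). simpl.
  destruct (andb _ _); [reflexivity | symmetry; apply gmul1].
Qed.

Lemma coord_conjz1 y : zpart y = 0%Z -> forall j,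
  coord (conjz t 1 y) j = gone A <-> coord y (j + k)%Z = gone A.
Proof.
  intros Ky j. rewrite conjz1. unfold coord.
  rewrite !he, (hom_inv he), wconj_base_eq_one by exact Ky.
  fold (zpart t). rewrite zpart_t. reflexivity.
Qed.

Lemma coord_conjz x : zpart x = 0%Z -> forall i j,
  coord (conjz t i x) j = gone A <-> coord x (j + i * k)%Z = gone A.
Proof.
  intro Kx.
  assert (Kc : forall i, zpart (conjz t i x) = 0%Z)
    by (intro i; rewrite (zhom_conjz zpart_mul); exact Kx).
  intro i. induction i as [|i IH|i IH] using Z.peano_ind; intro j.
  - unfold conjz. rewrite gmul1, gmulg1, Z.add_0_r. reflexivity.
  - rewrite <- Z.add_1_l, <- conjz_add, coord_conjz1, IH by apply Kc.
    replace (j + k + i * k)%Z with (j + (1 + i) * k)%Z by lia. reflexivity.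
  - replace j with (j - k + k)%Z at 1 by lia.
    rewrite <- coord_conjz1, conjz_add, Z.add_1_l, Z.succ_pred, IH by apply Kc.
    replace (j - k + i * k)%Z with (j + Z.pred i * k)%Z by lia. reflexivity.
Qed.

Lemma window_supp x : zquot x = 0%Z ->
  exists s, forall i, window (conjz t i x) <> gone D -> In i s.
Proof.
  intro Kx. apply zquot_eq0 in Kx. destruct (proj2_sig (fst (e x))) as [s hs].
  exists (map (fun m => (m / k)%Z) s). intros i Hi.
  assert (Ej : exists j, (0 <= j < k)%Z /\ coord (conjz t i x) j <> gone A).
  { apply NNPP. intro N. apply Hi. apply dext. intro j. simpl.
    destruct (andb (0 <=? j)%Z (j <? k)%Z) eqn:B; [|reflexivity].
    apply andb_prop in B. destruct B as [B1 B2]. apply Z.leb_le in B1. apply Z.ltb_lt in B2.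
    apply NNPP. intro N'. apply N. exists j. split; [lia | exact N']. }
  destruct Ej as [j [Bj Nj]]. apply in_map_iff. exists (j + i * k)%Z. split.
  - rewrite Z.div_add by lia. rewrite Z.div_small by lia. lia.
  - apply hs. intro E. apply Nj, (coord_conjz Kx). exact E.
Qed.

Lemma window_faithful x : zquot x = 0%Z ->
  (forall i, window (conjz t i x) = gone D) -> x = gone H.
Proof.
  intros Kx Hi. apply zquot_eq0 in Kx. apply je. rewrite (hom_one he).
  rewrite (surjective_pairing (e x)). fold (zpart x). rewrite Kx.
  change (gone (wreath A)) with (gone D, 0%Z). f_equal.
  apply dext. intro m. simpl.
  assert (DM := Z.div_mod m k ltac:(lia)). assert (MB := Z.mod_pos_bound m k k_pos).
  assert (C := f_equal (fun z : D => proj1_sig z (m mod k)%Z) (Hi (m / k)%Z)). simpl in C.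
  replace (andb (0 <=? m mod k)%Z (m mod k <? k)%Z) with true in C
    by (symmetry; apply andb_true_intro; split; [apply Z.leb_le | apply Z.ltb_lt]; lia).
  apply (coord_conjz Kx) in C. rewrite <- C. unfold coord. f_equal. lia.
Qed.

Lemma wreath_subgroup_embeds d : dl_embedding D -> derived_length_le H (S d) ->
  embeds H (Gn (S d)).
Proof.
  intros QD DH.
  destruct (embeds_wreath_derived_subgroup zquot_mul zquot_t window_mul window_supp
              window_faithful DH) as [C [EC [DC EH]]].
  eapply embeds_trans; [exact EH|].
  exact (embeds_trans (wreath_embeds (QD _ _ EC DC)) (wreath_Gn_embeds d)).
Qed.

End WreathSubgroup.

Lemma dl_embedding_wreath A : dl_embedding (dsum (fun _ : Z => A)) -> dl_embedding (wreath A).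
Proof.
  intros QD H d [e [he je]] DH. destruct d as [|d].
  { apply trivial_embeds, derived_length_le0_trivial, DH. }
  destruct (classic (forall h, zpart e h = 0%Z)) as [Z0|NZ].
  - apply (QD H (S d)); [|exact DH]. exists (fun h => fst (e h)). split.
    + intros x y. rewrite he, wmul_base by apply Z0. reflexivity.
    + intros x y E. apply je.
      rewrite (surjective_pairing (e x)), (surjective_pairing (e y)), E.
      unfold zpart in Z0. rewrite !Z0. reflexivity.
  - apply not_all_ex_not in NZ.
    destruct (zpart_min_positive he NZ) as [t [tpos tmin]].
    exact (wreath_subgroup_embeds he je tpos eq_refl tmin QD DH).
Qed.

Lemma dl_embedding_Gn n : dl_embedding (Gn n).
Proof.
  induction n as [|n IH]; [exact dl_embedding_trivial|].
  apply dl_embedding_dsum; [exact countable_Z|]. intro i.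
  apply dl_embedding_wreath, dl_embedding_dsum; [exact countable_Z|]. intro j. exact IH.
Qed.

Theorem theorem3 (H : Group) : in_R H <-> exists n : nat, embeds H (Gn n).
Proof.
  split.
  - intro RH. apply (RH (fun G => exists n, embeds G (Gn n))).
    + exists (Gn 0), 0. apply embeds_refl.
    + intros A [n E]. exists (S n). exact (embeds_trans (wreath_embeds E) (wreath_Gn_embeds n)).
    + intros I A cI [d Dd] CA. destruct (choice _ CA) as [n En]. exists d.
      apply (dl_embedding_dsum cI (fun i => @dl_embedding_Gn (n i))).
      * apply dsum_embeds, En.
      * apply dsum_derived_length_le, Dd.
    + intros G K E [n E']. exists n. exact (embeds_trans E E').
  - intros [n E] C ne cw cd cs. exact (cs _ _ E (Gn_in_class ne cw cd cs n)).
Qed.
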